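(* Let $H$ be a real Hilbert space, $\mathcal{I}$ a finite index set, $J,g_i:H\to\mathbb{R}$ ($i\in\mathcal{I}$) $\mathcal{C}^1$ functions, $\Omega=\{u\in H: g_i(u)\le 0\ \forall i\in\mathcal{I}\}$, and assume that for every $u\in\Omega$ with $I_A(u)\ne\emptyset$ the vectors $\{g_i'(u): i\in I_A(u)\}$ are linearly independent. Suppose $u\in\Omega$ is not a KKT point of the problem of minimizing $J$ over $\Omega$, and let $u(t)=u+t\,d_W(u)+\sum_{i\in I_W(u)}c_i(t)g_i'(u)$, where the functions $c_i$ ($i\in I_W(u)$), defined for small $t>0$, are such that $u(t)\in\Omega$, $g_i(u(t))=0$ for all $i\in I_W(u)$, $c_i(t)=o(t)$ for all $i\in I_W(u)$, and $\|\sum_{i\in I_W(u)}c_i(t)g_i'(u)\|=o(t)$ as $t\to0^+$. Then there exists $t_0>0$ depending on $u$ such that $$J(u(t))-J(u)<-\frac{t}{2}\|d_W(u)\|^2\quad\text{for all } 0<t<t_0.$$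
   Context: $J'(u)$, $g_i'(u)$ denote gradients in $H$; $\mathbb{P}_C$ is the metric projection onto a closed convex set $C$. For $u\in\Omega$: $I_A(u)=\{i\in\mathcal{I}: g_i(u)=0\}$; $C_A(u)=\{\sum_{i\in I_A(u)}a_ig_i'(u): a_i\ge0\}$ ($=\{0\}$ if empty); $d_A(u)=-J'(u)-\mathbb{P}_{C_A(u)}(-J'(u))$; $I_W(u)=\{i\in I_A(u): \langle g_i'(u), d_A(u)\rangle=0\}$; $C_W(u)=\{\sum_{i\in I_W(u)}a_ig_i'(u): a_i\ge 0\}$ ($=\{0\}$ if empty); $d_W(u)=-J'(u)-\mathbb{P}_{C_W(u)}(-J'(u))$. A point $u\in\Omega$ is a KKT point if there exist $\mu_i\ge0$ with $-J'(u)=\sum_{i\in\mathcal{I}}\mu_i g_i'(u)$ and $\mu_i g_i(u)=0$ for all $i$. (Such functions $c_i$ exist for non-KKT $u$.) *)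

From HB Require Import structures.
From mathcomp Require Import all_boot all_order all_algebra.
From mathcomp Require Import all_classical all_reals all_analysis.
Set Implicit Arguments. Unset Strict Implicit. Unset Printing Implicit Defensive.
Import Order.TTheory GRing.Theory Num.Theory.
Import numFieldNormedType.Exports.
Local Open Scope classical_set_scope.
Local Open Scope ring_scope.

(* A real inner product compatible with the norm of H (so that a complete
   normed space carrying it is a real Hilbert space). *)
Definition is_inner_product {R : realType} {H : normedModType R}
  (inner : H -> H -> R) : Prop :=
  [/\ (forall x y, inner x y = inner y x),
      (forall (a : R) x y z, inner (a *: x + y) z = a * inner x z + inner y z)
    & (forall x, inner x x = `|x| ^+ 2)].

Definition C1_with_gradient {R : realType} {H : normedModType R}
  (inner : H -> H -> R) (f : H -> R) (df : H -> H) : Prop :=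
  (forall u, differentiable f u /\ forall v, 'd f u v = inner (df u) v)
  /\ continuous df.

(* metric projection onto C (unique for C closed convex in a Hilbert space) *)
Definition proj {R : realType} {H : normedModType R} (C : set H) (x : H) : H :=
  xget 0 [set p | C p /\ forall q, C q -> `|x - p| <= `|x - q|].

Section Defs.
Context {R : realType} {H : normedModType R} {I : finType}.
Variables (inner : H -> H -> R) (J : H -> R) (dJ : H -> H)
          (g : I -> H -> R) (dg : I -> H -> H).

Definition Omega : set H := [set u | forall i, g i u <= 0].

Definition IA (u : H) : {set I} := [set i | g i u == 0].

Definition cone (S : {set I}) (u : H) : set H :=
  [set x | exists a : I -> R, (forall i, 0 <= a i) /\
           x = \sum_(i in S) a i *: dg i u].

Definition CA (u : H) : set H := cone (IA u) u.
Definition dA (u : H) : H := - dJ u - proj (CA u) (- dJ u).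
Definition IW (u : H) : {set I} :=
  [set i in IA u | inner (dg i u) (dA u) == 0].
Definition CW (u : H) : set H := cone (IW u) u.
Definition dW (u : H) : H := - dJ u - proj (CW u) (- dJ u).

Definition lin_indep (S : {set I}) (u : H) : Prop :=
  forall a : I -> R, \sum_(i in S) a i *: dg i u = 0 ->
    forall i, i \in S -> a i = 0.

Definition is_KKT (u : H) : Prop :=
  Omega u /\ exists mu : I -> R, (forall i, 0 <= mu i) /\
    - dJ u = \sum_i mu i *: dg i u /\ (forall i, mu i * g i u = 0).
End Defs.

(* At a non-KKT point [u] the direction [d := dW u] is nonzero, and since
   [-J'(u) = d + p] with [p] the projection of [-J'(u)] onto the cone [CW u],
   the variational inequality [<p, d> >= 0] gives [J'(u) d <= - |d|^2].
   The curve [u(t) = u + t d + o(t)] is tangent to [d] at [u], so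
   [J(u(t)) - J(u) = t J'(u) d + o(t) <= - t |d|^2 + o(t)], which is below
   [- t |d|^2 / 2] for small [t > 0]. *)
From Pilot Require Import Defs.
From HB Require Import structures.
From mathcomp Require Import all_boot all_order all_algebra.
From mathcomp Require Import all_classical all_reals all_analysis.
From mathcomp Require Import ring lra.
Import Order.TTheory GRing.Theory Num.Theory.
Import numFieldNormedType.Exports.
Local Open Scope classical_set_scope.
Local Open Scope ring_scope.

Lemma affine_ge0_at0 {R : realFieldType} (a b : R) : 0 <= b ->
  (forall e, 0 < e <= 1 -> 0 <= a + e * b) -> 0 <= a.
Proof.
move=> b0 ge0; rewrite leNgt; apply/negP => a0.
have ba : 0 < b - a by lra.
(* This choice of [e] makes [a + e * b = e * a < 0]. *)
set e := - a / (b - a).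
have eE : e * (b - a) = - a by rewrite divfK ?gt_eqF.
have e0 : 0 < e by rewrite divr_gt0 //; lra.
have e1 : e <= 1 by rewrite ler_pdivrMr // mul1r; lra.
have := ge0 e; rewrite e0 e1 => /(_ isT); nra.
Qed.

Section InnerProduct.
Context {R : realType} {H : normedModType R} {inner : H -> H -> R}.
Hypothesis ip : is_inner_product inner.

Lemma innerC x y : inner x y = inner y x.
Proof. by case: ip. Qed.

Lemma innerxx x : inner x x = `|x| ^+ 2.
Proof. by case: ip. Qed.

Lemma innerDl x y z : inner (x + y) z = inner x z + inner y z.
Proof. by case: ip => _ lin _; rewrite -[x in LHS]scale1r lin mul1r. Qed.

Lemma inner0l z : inner 0 z = 0.
Proof. by apply: (addrI (inner 0 z)); rewrite -innerDl !addr0. Qed.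

Lemma innerZl a x z : inner (a *: x) z = a * inner x z.
Proof. by case: ip => _ lin _; rewrite -[a *: x]addr0 lin inner0l addr0. Qed.

Lemma innerNl x z : inner (- x) z = - inner x z.
Proof. by rewrite -scaleN1r innerZl mulN1r. Qed.

Lemma innerDr x y z : inner z (x + y) = inner z x + inner z y.
Proof. by rewrite innerC innerDl !(innerC z). Qed.

Lemma innerZr a x z : inner z (a *: x) = a * inner z x.
Proof. by rewrite innerC innerZl innerC. Qed.

Lemma sqr_normD x y : `|x + y| ^+ 2 = `|x| ^+ 2 + 2 * inner x y + `|y| ^+ 2.
Proof. by rewrite -!innerxx innerDl !innerDr (innerC y x); ring. Qed.

(* If no nearest point exists, [proj] returns [0], which also satisfies the
   conclusion since [C 0]. *)
Lemma cone_proj (C : set H) x :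
  C 0 -> (forall s p, 0 <= s -> C p -> C (s *: p)) ->
  C (Defs.proj C x) /\ 0 <= inner (Defs.proj C x) (x - Defs.proj C x).
Proof.
move=> C0 CZ; rewrite /Defs.proj; case: xgetP => [p _ [Cp minp] | _]; last first.
  by rewrite inner0l.
split=> //; set D := x - p.
suff : 0 <= 2 * inner p D by rewrite pmulr_rge0.
apply: (@affine_ge0_at0 _ (2 * inner p D) (inner p p)).
  by rewrite innerxx sqr_ge0.
move=> e /andP[e0 e1].
have le_norm : `|D| <= `|D + e *: p|.
  have -> : D + e *: p = x - (1 - e) *: p.
    by rewrite /D scalerBl scale1r opprB addrA addrAC -addrA [- p + _]addrC.
  by apply/minp/CZ => //; lra.
have : `|D| ^+ 2 <= `|D + e *: p| ^+ 2 by have := normr_ge0 D; nra.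
rewrite (sqr_normD D) innerZr normrZ exprMn -(innerxx p) (innerC D p).
rewrite (ger0_norm (ltW e0)) => le_sqr.
have : 0 <= e * (2 * inner p D + e * inner p p) by nra.
by rewrite pmulr_rge0.
Qed.

End InnerProduct.

Section Cone.
Context {R : realType} {H : normedModType R} {I : finType} (dg : I -> H -> H).

Lemma cone0 S u : cone dg S u 0.
Proof. by exists (fun=> 0); split=> //; rewrite big1 // => i _; rewrite scale0r. Qed.

Lemma coneZ S u s p : 0 <= s -> cone dg S u p -> cone dg S u (s *: p).
Proof.
move=> s0 [a [a0 ->]]; exists (fun i => s * a i); split.
  by move=> i; rewrite mulr_ge0.
by rewrite scaler_sumr; apply: eq_bigr => i _; rewrite scalerA.
Qed.

End Cone.

Section WorkingDirection.
Context {R : realType} {H : normedModType R} {I : finType}.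
Context {inner : H -> H -> R} {dJ : H -> H} {g : I -> H -> R} {dg : I -> H -> H}.
Hypothesis ip : is_inner_product inner.

Local Notation IW := (IW inner dJ g dg).
Local Notation CW := (CW inner dJ g dg).
Local Notation dW := (dW inner dJ g dg).
Local Notation pW u := (Defs.proj (CW u) (- dJ u)).

Lemma CW_projW u : CW u (pW u) /\ 0 <= inner (pW u) (dW u).
Proof. by apply: (cone_proj ip); [apply: cone0 | apply: coneZ]. Qed.

Lemma dW_eq0_KKT u : Omega g u -> dW u = 0 -> is_KKT dJ g dg u.
Proof.
move=> Omu /eqP; rewrite subr_eq0 => /eqP dJE; split=> //.
have [[a [a0 pWE]] _] := CW_projW u.
exists (fun i => if i \in IW u then a i else 0); split; last split.
- by move=> i; case: ifP.
- rewrite dJE pWE big_mkcond /=; apply: eq_bigr => i _.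
  by case: ifP => // _; rewrite scale0r.
- move=> i; case: ifPn => [|_]; last by rewrite mul0r.
  by rewrite inE /IA inE => /andP[/eqP -> _]; rewrite mulr0.
Qed.

Lemma inner_grad_dW u : inner (dJ u) (dW u) <= - `|dW u| ^+ 2.
Proof.
have [_ pW_ge0] := CW_projW u.
have -> : dJ u = - (dW u + pW u) by rewrite /Defs.dW subrK opprK.
rewrite (innerNl ip) (innerDl ip) (innerxx ip); lra.
Qed.

End WorkingDirection.

Section TangentCurveDescent.
Context {R : realType} {H : normedModType R}.
Context {f : H -> R} {u D : H} {r : R -> H}.
Hypotheses (f_diff : differentiable f u)
  (r_o : (fun t => `|r t| / t) @ 0^'+ --> 0).

Lemma near_norm_lt_scale e : 0 < e -> \forall t \near 0^'+, `|r t| < e * t.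
Proof.
move=> e0; near=> t.
have t0 : 0 < t by near: t; exact: nbhs_right_gt.
have : `|(`|r t| / t)| < e by near: t; exact: (cvgr0_norm_lt _ r_o).
rewrite ger0_norm; last by rewrite divr_ge0 // ltW.
by rewrite ltr_pdivrMr.
Unshelve. all: by end_near.
Qed.

Lemma descent_along_tangent_curve b : 'd f u D < b ->
  \forall t \near 0^'+, f (u + t *: D + r t) - f u < t * b.
Proof.
move=> slope_lt; set m := b - 'd f u D.
have m0 : 0 < m by rewrite subr_gt0.
have [M M0 dfM] : exists2 M : R, 0 < M & forall y, `|'d f u y| <= M * `|y|.
  have : continuous ('d f u) := diff_continuous f_diff.
  by move/linear_bounded_continuous/linear_boundedP/pinfty_ex_gt0.
have ND0 : 0 < `|D| + 1 by rewrite ltr_pwDr.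
set eps := m / (2 * (`|D| + 1)).
have eps0 : 0 < eps by rewrite divr_gt0 // mulr_gt0.
have [eta eta0 remainder] : exists2 eta : R, 0 < eta & forall h, `|h| < eta ->
    `|f (u + h) - f u - 'd f u h| <= eps * `|h|.
  have /eqaddoP /(_ eps eps0) /nbhs_norm0P [eta eta0 small] := diff_locally f_diff.
  exists eta => // h /small; congr (`|_| <= _).
  by rewrite !fctE /= [h + u]addrC opprD addrA.
near=> t.
have t0 : 0 < t by near: t; exact: nbhs_right_gt.
have r_lt_t : `|r t| < 1 * t by near: t; exact: near_norm_lt_scale.
have r_lt_mt : `|r t| < m / (2 * M) * t.
  by near: t; apply: near_norm_lt_scale; rewrite divr_gt0 ?mulr_gt0.
have t_lt : t * (`|D| + 1) < eta.
  by rewrite -ltr_pdivlMr //; near: t; apply: nbhs_right_lt; rewrite divr_gt0.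
set h := t *: D + r t; rewrite -addrA.
have h_lt : `|h| < t * (`|D| + 1).
  rewrite (le_lt_trans (ler_normD _ _)) // normrZ gtr0_norm //; lra.
have dfh : 'd f u h = t * 'd f u D + 'd f u (r t) by rewrite linearD linearZ.
have dfr : 'd f u (r t) < t * (m / 2).
  have Mm : M * (m / (2 * M) * t) = t * (m / 2) by field; rewrite gt_eqF.
  rewrite -(ltr_pM2l M0) Mm in r_lt_mt.
  by rewrite (le_lt_trans (ler_norm _)) // (le_lt_trans (dfM _)).
have epsh : eps * `|h| <= t * (m / 2).
  have epsD : eps * (t * (`|D| + 1)) = t * (m / 2).
    by rewrite /eps; field; rewrite gt_eqF.
  by rewrite -epsD ler_wpM2l // ltW.
have := remainder h (lt_trans h_lt t_lt); rewrite dfh.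
have tm : t * m = t * b - t * 'd f u D by rewrite mulrBr.
move/(le_trans (ler_norm _)); lra.
Unshelve. all: by end_near.
Qed.

End TangentCurveDescent.

Theorem lemma5 (R : realType) (H : completeNormedModType R) (I : finType)
  (inner : H -> H -> R) (J : H -> R) (dJ : H -> H)
  (g : I -> H -> R) (dg : I -> H -> H) :
  is_inner_product inner ->
  C1_with_gradient inner J dJ ->
  (forall i, C1_with_gradient inner (g i) (dg i)) ->
  (forall u, Omega g u -> IA g u != finset.set0 -> lin_indep dg (IA g u) u) ->
  forall (u : H) (c : I -> R -> R),
  Omega g u ->
  ~ is_KKT dJ g dg u ->
  let ut := fun t : R =>
    u + t *: dW inner dJ g dg u + \sum_(i in IW inner dJ g dg u) c i t *: dg i u in
  (\forall t \near 0^'+, Omega g (ut t) /\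
      forall i, i \in IW inner dJ g dg u -> g i (ut t) = 0) ->
  (forall i, i \in IW inner dJ g dg u -> (fun t => c i t / t) @ 0^'+ --> 0) ->
  ((fun t => `|\sum_(i in IW inner dJ g dg u) c i t *: dg i u| / t) @ 0^'+ --> 0) ->
  exists2 t0 : R, 0 < t0 &
    forall t : R, 0 < t < t0 ->
      J (ut t) - J u < - (t / 2) * `|dW inner dJ g dg u| ^+ 2.
Proof.
move=> ip J_C1 _ _ u c Omu not_KKT ut _ _ r_o.
set d := dW inner dJ g dg u in ut *.
have d_neq0 : d != 0.
  by apply/eqP => /(dW_eq0_KKT ip _ Omu); exact: not_KKT.
have [J_diff J_grad] := J_C1.1 u.
have slope : 'd J u d < - (`|d| ^+ 2 / 2).
  have grad_d : inner (dJ u) d <= - `|d| ^+ 2 := inner_grad_dW ip u.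
  rewrite J_grad; have : 0 < `|d| ^+ 2 by rewrite exprn_gt0 // normr_gt0.
  lra.
have [e e0 descent] := descent_along_tangent_curve J_diff r_o _ slope.
exists e => // t /andP[t0 te].
have -> : - (t / 2) * `|d| ^+ 2 = t * - (`|d| ^+ 2 / 2) by ring.
by apply: descent => //=; rewrite sub0r normrN gtr0_norm.
Qed.
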